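(* Let $\mathbf G_n$ be distributed either as the Poisson random factor graph $\mathbf G_n(d,\Omega,k,\Psi,\rho)$ or as the percolated regular factor graph $\mathbf G^\varepsilon_{n,\mathrm{reg}}(d,\Omega,k,\Psi,\rho)$ (for a fixed $\varepsilon>0$). If $$\lim_{\ell\to\infty}\limsup_{n\to\infty}\frac1n\sum_{i=1}^n\sum_{\sigma\in\Omega^n}\mathbb E\Big[\mu_{\mathbf G_n}(\sigma)\left\|\mu_{\mathbf G_n,x_i}-\mu_{\mathbf G_n,x_i}[\,\cdot\,|\nabla_\ell(\mathbf G_n,x_i,\sigma)]\right\|_{TV}\Big]=0,$$ then $$\lim_{n\to\infty}\frac1{n^2}\sum_{i,j=1}^n\mathbb E\left\|\mu_{\mathbf G_n,x_i,x_j}-\mu_{\mathbf G_n,x_i}\otimes\mu_{\mathbf G_n,x_j}\right\|_{TV}=0.$$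
   Context: Factor graphs: Fix a finite set $\Omega$ of spins. A factor graph $G$ has variable nodes $V(G)$, constraint nodes $F(G)$, for each $a\in F(G)$ an ordered tuple $\partial a$ of variable nodes and a weight function $\psi_a:\Omega^{|\partial a|}\to(0,\infty)$; Gibbs measure $\mu_G(\sigma)=Z_G^{-1}\prod_a\psi_a(\sigma(\partial a))$ on $\Omega^{V(G)}$. $\mu_{G,x}$, $\mu_{G,x,y}$ are one- and two-point marginals, and $\mu_{G,x}[\cdot|E]$ the marginal of $x$ under $\mu_G$ conditioned on an event $E\subset\Omega^{V(G)}$. The bipartite graph on $V(G)\cup F(G)$ joining $a$ with the variables in $\partial a$ induces a shortest-path metric. For $x\in V(G)$, $\ell\geq1$, $\sigma\in\Omega^{V(G)}$, $\nabla_\ell(G,x,\sigma)$ is the set of $\tau\in\Omega^{V(G)}$ with $\tau(y)=\sigma(y)$ for all variable nodes $y$ at distance greater than $\ell$ from $x$. Models: $d$ fixed (a positive integer for the regular model, $d>0$ for the Poisson model), $k\geq3$, $\Psi$ a finite nonempty set of functions $\Omega^k\to(0,\infty)$, $\rho$ a distribution on $\Psi$, all fixed as $n\to\infty$. Poisson model $\mathbf G_n(d,\Omega,k,\Psi,\rho)$: variable nodes $x_1,\ldots,x_n$, $m\sim\mathrm{Po}(dn/k)$ constraint nodes, each independently with $\psi_{a_i}\sim\rho$ and $\partial a_i$ uniform in $\{x_1,\ldots,x_n\}^k$. For $\psi\in\Psi$, $J\subset[k]$ let $\psi^J((\sigma_j)_{j\in J})=|\Omega|^{|J|-k}\sum_{(\sigma_j)_{j\notin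 J}}\psi(\sigma_1,\ldots,\sigma_k)$. Percolated regular model $\mathbf G^\varepsilon_{n,\mathrm{reg}}$: (REG1) $m\sim\mathrm{Po}(dn/k)$; (REG2) independently for $i\in[m]$, $J_i\subset[k]$ includes each element with probability $1-\varepsilon$ independently, $\psi_i\sim\rho$, and $a_i$ gets weight $\psi_i^{J_i}$ and $|J_i|$ ordered neighbour slots; (REG3) if $\sum_i|J_i|>dn$ start over, otherwise choose the neighbour tuples uniformly subject to every variable node having degree at most $d$. *)

From Stdlib Require Import Reals List Arith Bool Classical ClassicalDescription ClassicalEpsilon.
Import ListNotations.
Open Scope R_scope.

(* Spins Omega = {0,...,q-1}; variables x_1..x_n are 0..n-1. *)

Definition lsum {A : Type} (f : A -> R) (l : list A) : R :=
  fold_right (fun a acc => f a + acc) 0 l.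

Fixpoint tuples (n k : nat) : list (list nat) :=
  match k with
  | O => [[]]
  | S k' => flat_map (fun x => map (cons x) (tuples n k')) (seq 0 n)
  end.

(* a constraint node: weight function and ordered tuple of neighbours *)
Definition constraint : Type := ((list nat -> R) * list nat)%type.
Definition fgraph : Type := list constraint.

Definition weight (G : fgraph) (s : list nat) : R :=
  fold_right (fun a acc => fst a (map (fun v => nth v s 0%nat) (snd a)) * acc) 1 G.

Definition Zpart (q n : nat) (G : fgraph) : R := lsum (weight G) (tuples q n).

Definition gibbs (q n : nat) (G : fgraph) (s : list nat) : R := weight G s / Zpart q n G.

Definition marg1 (q n : nat) (G : fgraph) (x : nat) (a : nat) : R :=
  lsum (fun s => if Nat.eqb (nth x s 0%nat) a then gibbs q n G s else 0) (tuples q n).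

Definition marg2 (q n : nat) (G : fgraph) (x y : nat) (a b : nat) : R :=
  lsum (fun s => if Nat.eqb (nth x s 0%nat) a && Nat.eqb (nth y s 0%nat) b
                 then gibbs q n G s else 0) (tuples q n).

Definition condmarg (q n : nat) (G : fgraph) (x : nat) (E : list nat -> bool) (a : nat) : R :=
  lsum (fun s => if E s && Nat.eqb (nth x s 0%nat) a then gibbs q n G s else 0) (tuples q n)
  / lsum (fun s => if E s then gibbs q n G s else 0) (tuples q n).

Definition tv1 (q : nat) (p r : nat -> R) : R :=
  / 2 * lsum (fun a => Rabs (p a - r a)) (seq 0 q).

Definition tv2 (q : nat) (p r : nat -> nat -> R) : R :=
  / 2 * lsum (fun a => lsum (fun b => Rabs (p a b - r a b)) (seq 0 q)) (seq 0 q).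

(* near G x h y : variable y is reachable from x in at most h constraint hops,
   i.e. the bipartite distance between x and y is at most 2h. *)
Fixpoint near (G : fgraph) (h : nat) (x y : nat) {struct h} : bool :=
  match h with
  | O => Nat.eqb x y
  | S h' => near G h' x y ||
            existsb (fun a => existsb (fun z => near G h' x z) (snd a)
                              && existsb (Nat.eqb y) (snd a)) G
  end.

(* variable-to-variable distances are even, so dist(x,y) <= l iff y is
   within floor(l/2) constraint hops. *)
Definition dist_le (G : fgraph) (x y l : nat) : bool := near G (Nat.div2 l) x y.

Definition nabla (n : nat) (G : fgraph) (x l : nat) (sigma tau : list nat) : bool :=
  forallb (fun y => dist_le G x y l || Nat.eqb (nth y tau 0%nat) (nth y sigma 0%nat))
          (seq 0 n).

Definition series (u : nat -> R) : R :=
  match excluded_middle_informative (exists l, infinite_sum u l) with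
  | left H => proj1_sig (constructive_indefinite_description _ H)
  | right _ => 0
  end.

Definition po (lam : R) (m : nat) : R := exp (- lam) * lam ^ m / INR (fact m).

(* independent draws: m i.i.d. elements of a finite weighted list *)
Fixpoint draw_list {A : Type} (dr : list (R * A)) (m : nat) : list (R * list A) :=
  match m with
  | O => [(1, [])]
  | S m' => flat_map (fun c => map (fun cs => (fst c * fst cs, snd c :: snd cs))
                                   (draw_list dr m')) dr
  end.

(* rho : distribution on Psi, given as a list of (probability, weight function) *)
Definition spec (q k : nat) (rho : list (R * (list nat -> R))) : Prop :=
  rho <> [] /\ Forall (fun pw => 0 <= fst pw) rho /\ lsum fst rho = 1 /\
  Forall (fun pw => forall s, length s = k -> Forall (fun v => (v < q)%nat) s ->
                              0 < snd pw s) rho.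

Definition pois_draws (n k : nat) (rho : list (R * (list nat -> R))) : list (R * constraint) :=
  flat_map (fun pw => map (fun t => (fst pw / INR n ^ k, (snd pw, t))) (tuples n k)) rho.

Definition EPois (d : R) (k : nat) (rho : list (R * (list nat -> R))) (n : nat)
  (F : fgraph -> R) : R :=
  series (fun m => po (d * INR n / INR k) m *
    lsum (fun pc => fst pc * F (snd pc)) (draw_list (pois_draws n k rho) m)).

Definition subsets (k : nat) : list (list nat) :=
  map (fun b => filter (fun i => Nat.eqb (nth i b 0%nat) 1) (seq 0 k)) (tuples 2 k).

(* psi^J, arguments ordered by increasing index in J *)
Definition psiJ (q k : nat) (psi : list nat -> R) (J : list nat) (tau : list nat) : R :=
  lsum (fun s => if list_eq_dec Nat.eq_dec (map (fun j => nth j s 0%nat) J) tau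
                 then psi s else 0) (tuples q k)
  / INR q ^ (k - length J).

(* one factor: (weight function psi^J, arity |J|) with its probability *)
Definition reg_draws (q k : nat) (eps : R) (rho : list (R * (list nat -> R)))
  : list (R * ((list nat -> R) * nat)) :=
  flat_map (fun pw => map (fun J => (fst pw * (1 - eps) ^ length J * eps ^ (k - length J),
                                     (psiJ q k (snd pw) J, length J))) (subsets k)) rho.

Definition slots (ar : list ((list nat -> R) * nat)) : nat :=
  fold_right (fun a acc => (snd a + acc)%nat) 0%nat ar.

Definition deg_ok (n d : nat) (t : list nat) : bool :=
  forallb (fun v => Nat.leb (count_occ Nat.eq_dec t v) d) (seq 0 n).

Fixpoint build (ar : list ((list nat -> R) * nat)) (t : list nat) : fgraph :=
  match ar with
  | [] => []
  | a :: ar' => (fst a, firstn (snd a) t) :: build ar' (skipn (snd a) t)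
  end.

Definition reg_term (n d : nat) (F : fgraph -> R) (pc : R * list ((list nat -> R) * nat)) : R :=
  if Nat.leb (slots (snd pc)) (d * n) then
    let V := filter (deg_ok n d) (tuples n (slots (snd pc))) in
    fst pc * (lsum (fun t => F (build (snd pc) t)) V / INR (length V))
  else 0.

Definition reg_acc (n d : nat) (pc : R * list ((list nat -> R) * nat)) : R :=
  if Nat.leb (slots (snd pc)) (d * n) then fst pc else 0.

(* expectation of F(G^eps_{n,reg}): (REG1)-(REG2) conditioned on acceptance
   (REG3), neighbour slots uniform subject to max degree <= d *)
Definition EReg (q d k : nat) (eps : R) (rho : list (R * (list nat -> R))) (n : nat)
  (F : fgraph -> R) : R :=
  series (fun m => po (INR d * INR n / INR k) m *
           lsum (reg_term n d F) (draw_list (reg_draws q k eps rho) m))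
  / series (fun m => po (INR d * INR n / INR k) m *
           lsum (reg_acc n d) (draw_list (reg_draws q k eps rho) m)).

Definition overlap_quantity (q : nat) (E : nat -> (fgraph -> R) -> R) (l n : nat) : R :=
  / INR n * lsum (fun i => lsum (fun sigma =>
      E n (fun G => gibbs q n G sigma *
                    tv1 q (marg1 q n G i) (condmarg q n G i (nabla n G i l sigma))))
    (tuples q n)) (seq 0 n).

(* lim_{l->oo} limsup_{n->oo} a l n = 0, for a nonnegative double sequence *)
Definition lim_limsup_zero (a : nat -> nat -> R) : Prop :=
  forall e, e > 0 -> exists L, forall l, (l >= L)%nat ->
    exists N, forall n, (n >= N)%nat -> a l n < e.

Definition pair_corr (q : nat) (E : nat -> (fgraph -> R) -> R) (n : nat) : R :=
  / (INR n ^ 2) * lsum (fun i => lsum (fun j =>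
      E n (fun G => tv2 q (marg2 q n G i j) (fun a b => marg1 q n G i a * marg1 q n G j b)))
    (seq 0 n)) (seq 0 n).

(* If x_j is farther than l from x_i, conditioning on
   nabla_l(G, x_i, sigma) leaves the spin of x_j unchanged, so
     mu_ij(a,b) - mu_i(a) mu_j(b)
       = sum_sigma mu(sigma) 1{sigma_j = b} (mu_i(a | nabla_l(sigma)) - mu_i(a)),
   and the total variation distance of the pair is at most the overlap term of x_i.  Bounding
   the remaining pairs by 1,
     sum_ij TV_ij <= #{pairs at distance <= l} + n sum_i overlap_i.
   If all degrees are at most D, a ball of radius l holds at most (1 + k D)^(l/2) variables.
   In the regular model D = d.  In the Poisson model take D = 2 log2 n + 2 and charge the
   graphs with a larger degree to E sum_z 2^deg(z) <= n exp (d 2^k).  Both expectations are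
   normalised Poisson mixtures of positive linear functionals, so this pointwise bound can be
   averaged; dividing by n^2 and letting n -> oo, then l -> oo, proves the claim. *)

From Stdlib Require Import Reals List Arith Lra Lia Bool.
From Stdlib Require Import FunctionalExtensionality Classical ClassicalDescription ClassicalEpsilon.
Import ListNotations.
Open Scope R_scope.

(** * Finite sums and series *)

Lemma lsum_nil {A} (f : A -> R) : lsum f [] = 0.
Proof. reflexivity. Qed.

Lemma lsum_cons {A} (f : A -> R) a l : lsum f (a :: l) = f a + lsum f l.
Proof. reflexivity. Qed.

Lemma lsum_app {A} (f : A -> R) l1 l2 : lsum f (l1 ++ l2) = lsum f l1 + lsum f l2.
Proof.
  induction l1 as [|a l1 IH]; simpl app; rewrite ?lsum_nil, ?lsum_cons; [ring|].
  rewrite IH; ring.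
Qed.

Lemma lsum_map {A B} (f : B -> R) (g : A -> B) l :
  lsum f (map g l) = lsum (fun x => f (g x)) l.
Proof. induction l as [|a l IH]; [reflexivity|]. simpl map. rewrite !lsum_cons, IH. reflexivity. Qed.

Lemma lsum_flat_map {A B} (f : B -> R) (g : A -> list B) l :
  lsum f (flat_map g l) = lsum (fun x => lsum f (g x)) l.
Proof. induction l as [|a l IH]; [reflexivity|]. simpl flat_map. rewrite lsum_app, IH. reflexivity. Qed.

Lemma lsum_ext {A} (f g : A -> R) l :
  (forall x, In x l -> f x = g x) -> lsum f l = lsum g l.
Proof.
  induction l as [|a l IH]; intros H; [reflexivity|].
  rewrite !lsum_cons, IH by (intros; apply H; right; auto).
  rewrite H by (left; auto). reflexivity.
Qed.

Lemma lsum_add {A} (f g : A -> R) l :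
  lsum (fun x => f x + g x) l = lsum f l + lsum g l.
Proof. induction l as [|a l IH]; [simpl; ring|]. rewrite !lsum_cons, IH. ring. Qed.

Lemma lsum_mull {A} (c : R) (f : A -> R) l : lsum (fun x => c * f x) l = c * lsum f l.
Proof. induction l as [|a l IH]; [simpl; ring|]. rewrite !lsum_cons, IH. ring. Qed.

Lemma lsum_mulr {A} (c : R) (f : A -> R) l : lsum (fun x => f x * c) l = lsum f l * c.
Proof. rewrite Rmult_comm, <- lsum_mull. apply lsum_ext; intros; ring. Qed.

Lemma lsum_sub {A} (f g : A -> R) l : lsum (fun x => f x - g x) l = lsum f l - lsum g l.
Proof. induction l as [|a l IH]; [simpl; ring|]. rewrite !lsum_cons, IH. ring. Qed.

Lemma lsum_const {A} (c : R) (l : list A) : lsum (fun _ => c) l = INR (length l) * c.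
Proof. induction l as [|a l IH]; [simpl; ring|]. rewrite lsum_cons, IH, length_cons, S_INR. ring. Qed.

Lemma lsum_zero {A} (l : list A) : lsum (fun _ => 0) l = 0.
Proof. rewrite lsum_const. ring. Qed.

Lemma lsum_le {A} (f g : A -> R) l :
  (forall x, In x l -> f x <= g x) -> lsum f l <= lsum g l.
Proof.
  induction l as [|a l IH]; intros H; [simpl; lra|].
  rewrite !lsum_cons. apply Rplus_le_compat; [|apply IH]; simpl in *; auto.
Qed.

Lemma lsum_nonneg {A} (f : A -> R) l : (forall x, In x l -> 0 <= f x) -> 0 <= lsum f l.
Proof. intros H. rewrite <- (lsum_zero l). apply lsum_le; auto. Qed.

Lemma lsum_comm {A B} (f : A -> B -> R) l1 l2 :
  lsum (fun a => lsum (fun b => f a b) l2) l1 = lsum (fun b => lsum (fun a => f a b) l1) l2.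
Proof.
  induction l1 as [|a l1 IH]; [symmetry; apply lsum_zero|].
  rewrite lsum_cons, IH, <- lsum_add. reflexivity.
Qed.

Lemma Rabs_lsum_le {A} (f : A -> R) l : Rabs (lsum f l) <= lsum (fun x => Rabs (f x)) l.
Proof.
  induction l as [|a l IH]; [simpl; rewrite Rabs_R0; lra|].
  rewrite !lsum_cons. eapply Rle_trans; [apply Rabs_triang|]. lra.
Qed.

Lemma lsum_ge_term {A} (f : A -> R) l x :
  (forall y, In y l -> 0 <= f y) -> In x l -> f x <= lsum f l.
Proof.
  induction l as [|a l IH]; intros H Hx; [destruct Hx|]. rewrite lsum_cons.
  assert (0 <= f a) by (apply H; left; auto).
  assert (0 <= lsum f l) by (apply lsum_nonneg; intros; apply H; right; auto).
  destruct Hx as [<-|Hx]; [lra|].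
  assert (f x <= lsum f l) by (apply IH; auto; intros; apply H; right; auto). lra.
Qed.

Lemma lsum_weighted_le {A} (c w : A -> R) l :
  (forall x, In x l -> 0 <= w x) -> (forall x, In x l -> c x <= 1) ->
  lsum (fun x => c x * w x) l <= lsum w l.
Proof.
  intros Hw Hc. apply lsum_le; intros x Hx.
  rewrite <- (Rmult_1_l (w x)) at 2. apply Rmult_le_compat_r; auto.
Qed.

Definition indic (b : bool) : R := if b then 1 else 0.

Lemma indic_nonneg b : 0 <= indic b.
Proof. destruct b; simpl; lra. Qed.

Lemma indic_le1 b : indic b <= 1.
Proof. destruct b; simpl; lra. Qed.

Lemma if_indic (b : bool) (x : R) : (if b then x else 0) = indic b * x.
Proof. destruct b; simpl; ring. Qed.

Lemma indic_andb b c : indic (b && c) = indic b * indic c.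
Proof. destruct b, c; simpl; ring. Qed.

Lemma indic_orb_le b c : indic (b || c) <= indic b + indic c.
Proof. destruct b, c; simpl; lra. Qed.

Lemma lsum_indic_eqb_le1 v s len : lsum (fun a => indic (Nat.eqb v a)) (seq s len) <= 1.
Proof.
  revert s; induction len as [|len IH]; intros s; simpl seq; [simpl; lra|].
  rewrite lsum_cons. destruct (Nat.eqb_spec v s) as [->|Hvs]; simpl indic.
  - rewrite (lsum_ext _ (fun _ => 0)), lsum_zero; [lra|].
    intros x Hx. apply in_seq in Hx. destruct (Nat.eqb_spec s x); [lia|reflexivity].
  - specialize (IH (S s)). lra.
Qed.

Lemma indic_existsb_le {A} (f : A -> bool) l : indic (existsb f l) <= lsum (fun a => indic (f a)) l.
Proof.
  induction l as [|a l IH]; [simpl; lra|]. simpl existsb. rewrite lsum_cons.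
  eapply Rle_trans; [apply indic_orb_le|]. lra.
Qed.

Definition occ (t : list nat) (z : nat) : R := INR (count_occ Nat.eq_dec t z).

Lemma occ_cons v t z : occ (v :: t) z = indic (Nat.eqb v z) + occ t z.
Proof.
  unfold occ; simpl. destruct (Nat.eq_dec v z), (Nat.eqb_spec v z); try lia; simpl indic;
    [rewrite S_INR|]; lra.
Qed.

Lemma occ_nonneg t z : 0 <= occ t z.
Proof. apply pos_INR. Qed.

Lemma lsum_occ_le t s len : lsum (occ t) (seq s len) <= INR (length t).
Proof.
  induction t as [|v t IH]; [unfold occ; simpl; rewrite lsum_zero; lra|].
  rewrite (lsum_ext _ (fun y => indic (Nat.eqb v y) + occ t y)) by (intros; apply occ_cons).
  rewrite lsum_add, length_cons, S_INR. pose proof (lsum_indic_eqb_le1 v s len). lra.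
Qed.

Lemma indic_mem_le_occ y t : indic (existsb (Nat.eqb y) t) <= occ t y.
Proof.
  induction t as [|v t IH]; [unfold occ; simpl; lra|]. simpl existsb. rewrite occ_cons.
  eapply Rle_trans; [apply indic_orb_le|]. rewrite Nat.eqb_sym. lra.
Qed.

(* Rocq's [/ 0 = 0] makes the next three lemmas hold without a positivity hypothesis. *)
Lemma Rinv_nonneg x : 0 <= x -> 0 <= / x.
Proof.
  intros H. destruct (Req_dec x 0) as [->|]; [rewrite Rinv_0; lra|].
  left; apply Rinv_0_lt_compat; lra.
Qed.

Lemma Rdiv_nonneg x y : 0 <= x -> 0 <= y -> 0 <= x / y.
Proof. intros; apply Rmult_le_pos; auto using Rinv_nonneg. Qed.

Lemma Rdiv_le_1 x y : 0 <= x <= y -> x / y <= 1.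
Proof.
  intros [H1 H2]. destruct (Req_dec y 0) as [->|]; [unfold Rdiv; rewrite Rinv_0; lra|].
  apply (Rmult_le_reg_r y); [lra|]. unfold Rdiv; rewrite Rmult_assoc, Rinv_l; lra.
Qed.

Lemma series_eq u l : infinite_sum u l -> series u = l.
Proof.
  intros H. unfold series. destruct (excluded_middle_informative _) as [e|n].
  - destruct (constructive_indefinite_description _ e) as [l' Hl']. eapply uniqueness_sum; eauto.
  - exfalso; apply n; eauto.
Qed.

Lemma infinite_sum_ext u v l : (forall m, u m = v m) -> infinite_sum u l -> infinite_sum v l.
Proof. intros E H. replace v with u; auto. apply functional_extensionality; auto. Qed.

Lemma infinite_sum_0 : infinite_sum (fun _ => 0) 0.
Proof.
  intros e He; exists 0%nat; intros n _. unfold R_dist.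
  rewrite sum_cte, Rmult_0_l, Rminus_diag, Rabs_R0; lra.
Qed.

Lemma infinite_sum_add u v lu lv : infinite_sum u lu -> infinite_sum v lv ->
  infinite_sum (fun m => u m + v m) (lu + lv).
Proof.
  intros Hu Hv. apply (Un_cv_ext (fun N => sum_f_R0 u N + sum_f_R0 v N)).
  - intros; symmetry; apply sum_plus.
  - apply CV_plus; auto.
Qed.

Lemma infinite_sum_scal c u l : infinite_sum u l -> infinite_sum (fun m => c * u m) (c * l).
Proof.
  intros Hu. apply (Un_cv_ext (fun N => c * sum_f_R0 u N)).
  - intros N. rewrite scal_sum. apply sum_eq; intros; ring.
  - apply (CV_mult (fun _ => c)); auto.
    intros e He; exists 0%nat; intros; unfold R_dist. rewrite Rminus_diag, Rabs_R0; lra.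
Qed.

Lemma infinite_sum_lsum {A} (u : A -> nat -> R) (U : A -> R) l :
  (forall i, In i l -> infinite_sum (u i) (U i)) ->
  infinite_sum (fun m => lsum (fun i => u i m) l) (lsum U l).
Proof.
  induction l as [|a l IH]; intros H; [apply infinite_sum_0|].
  apply infinite_sum_add; [apply H; left; auto|apply IH; intros; apply H; right; auto].
Qed.

Lemma infinite_sum_le u v lu lv :
  (forall m, u m <= v m) -> infinite_sum u lu -> infinite_sum v lv -> lu <= lv.
Proof.
  intros H Hu Hv. eapply Rle_cv_lim; [|exact Hu|exact Hv].
  intros n; induction n; simpl; auto. apply Rplus_le_compat; auto.
Qed.

Lemma infinite_sum_nonneg u l : (forall m, 0 <= u m) -> infinite_sum u l -> 0 <= l.
Proof. intros H Hu. apply (infinite_sum_le (fun _ => 0) u 0 l); auto using infinite_sum_0. Qed.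

Lemma infinite_sum_dominated u v lv : (forall m, 0 <= u m <= v m) -> infinite_sum v lv ->
  infinite_sum u (series u).
Proof.
  intros H Hv. destruct (Rseries_CV_comp u v H (exist _ lv Hv)) as [l Hl].
  rewrite (series_eq u l Hl). exact Hl.
Qed.

Lemma po_nonneg lam m : 0 <= lam -> 0 <= po lam m.
Proof.
  intros. apply Rdiv_nonneg; [|apply pos_INR].
  apply Rmult_le_pos; [left; apply exp_pos|apply pow_le; auto].
Qed.

Lemma infinite_sum_po_pow lam S :
  infinite_sum (fun m => po lam m * S ^ m) (exp (- lam) * exp (lam * S)).
Proof.
  apply (infinite_sum_ext (fun m => exp (- lam) * (/ INR (fact m) * (lam * S) ^ m))).
  - intros m. unfold po. rewrite Rpow_mult_distr. unfold Rdiv. ring.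
  - apply infinite_sum_scal. exact (proj2_sig (exist_exp (lam * S))).
Qed.

Lemma in_tuples n k s : In s (tuples n k) -> length s = k /\ Forall (fun v => (v < n)%nat) s.
Proof.
  revert s; induction k as [|k IH]; intros s H; simpl in H.
  - destruct H as [<-|[]]. simpl; auto.
  - apply in_flat_map in H as [x [Hx H]]. apply in_map_iff in H as [s' [<- Hs']].
    apply IH in Hs' as [L F]. apply in_seq in Hx. simpl. split; auto. constructor; auto; lia.
Qed.

Lemma length_tuples n k : length (tuples n k) = (n ^ k)%nat.
Proof.
  induction k as [|k IH]; [reflexivity|]. simpl tuples. rewrite length_flat_map.
  rewrite (map_ext _ (fun _ => (n ^ k)%nat)) by (intros; rewrite length_map; auto).
  rewrite map_const, length_seq, Nat.pow_succ_r'.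
  generalize (n ^ k)%nat. clear. induction n as [|n IH]; intros c; simpl; auto.
Qed.

Lemma tv1_nonneg q p r : 0 <= tv1 q p r.
Proof. unfold tv1. apply Rmult_le_pos; [lra|]. apply lsum_nonneg; intros; apply Rabs_pos. Qed.

Lemma tv2_nonneg q p r : 0 <= tv2 q p r.
Proof.
  unfold tv2. apply Rmult_le_pos; [lra|].
  apply lsum_nonneg; intros; apply lsum_nonneg; intros; apply Rabs_pos.
Qed.

Lemma Rabs_sub_le_add x y : 0 <= x -> 0 <= y -> Rabs (x - y) <= x + y.
Proof. intros. unfold Rabs; destruct (Rcase_abs _); lra. Qed.

Lemma tv1_le1 q p r : (forall a, 0 <= p a) -> (forall a, 0 <= r a) ->
  lsum p (seq 0 q) <= 1 -> lsum r (seq 0 q) <= 1 -> tv1 q p r <= 1.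
Proof.
  intros Hp Hr Sp Sr. unfold tv1.
  assert (lsum (fun a => Rabs (p a - r a)) (seq 0 q) <= lsum (fun a => p a + r a) (seq 0 q))
    by (apply lsum_le; intros; apply Rabs_sub_le_add; auto).
  rewrite lsum_add in H. lra.
Qed.

Lemma tv2_le1 q p r : (forall a b, 0 <= p a b) -> (forall a b, 0 <= r a b) ->
  lsum (fun a => lsum (p a) (seq 0 q)) (seq 0 q) <= 1 ->
  lsum (fun a => lsum (r a) (seq 0 q)) (seq 0 q) <= 1 -> tv2 q p r <= 1.
Proof.
  intros Hp Hr Sp Sr. unfold tv2.
  assert (lsum (fun a => lsum (fun b => Rabs (p a b - r a b)) (seq 0 q)) (seq 0 q)
          <= lsum (fun a => lsum (p a) (seq 0 q) + lsum (r a) (seq 0 q)) (seq 0 q)).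
  { apply lsum_le; intros a _. rewrite <- lsum_add.
    apply lsum_le; intros; apply Rabs_sub_le_add; auto. }
  rewrite lsum_add in H. lra.
Qed.

(** * Decorrelation of far pairs *)

Section ConditionOnClasses.

Variables (A : Type) (ts : list A) (mu : A -> R) (E : A -> A -> bool).
Hypothesis mu_nonneg : forall s, In s ts -> 0 <= mu s.
Hypothesis E_refl : forall s, E s s = true.
Hypothesis E_sym : forall s t, E s t = E t s.
Hypothesis E_trans : forall s t r, E s t = true -> E s r = E t r.

(* The tower property for the partition into [E]-classes: averaging the conditional
   expectation of [g] on the class of [s] against a class function [f] gives [E (g f)]. *)
Lemma lsum_cond_class (f g : A -> R) : (forall s t, E s t = true -> f s = f t) ->
  lsum (fun s => mu s * f s * (lsum (fun t => indic (E s t) * g t * mu t) ts /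
                               lsum (fun t => indic (E s t) * mu t) ts)) ts
  = lsum (fun t => g t * f t * mu t) ts.
Proof.
  intros Hf. set (D s := lsum (fun t => indic (E s t) * mu t) ts).
  transitivity (lsum (fun s => lsum (fun t => mu s * f s / D s * (indic (E s t) * g t * mu t)) ts) ts).
  { apply lsum_ext; intros s _. unfold Rdiv. rewrite lsum_mull. fold (D s). ring. }
  rewrite lsum_comm. apply lsum_ext; intros t Ht.
  transitivity (lsum (fun s => indic (E t s) * mu s * (f t / D t * g t * mu t)) ts).
  { apply lsum_ext; intros s _. rewrite (E_sym t s).
    destruct (E s t) eqn:Est; simpl indic; [|ring].
    assert (D s = D t) by (apply lsum_ext; intros r _; rewrite (E_trans s t r Est); auto).
    rewrite (Hf s t Est), H. unfold Rdiv; ring. }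
  rewrite lsum_mulr. fold (D t).
  destruct (Req_dec (D t) 0) as [Z|Z]; [|field; auto].
  assert (mu t <= 0); [|assert (mu t = 0) as -> by (pose proof (mu_nonneg t Ht); lra); ring].
  rewrite <- Z, <- (Rmult_1_l (mu t)). change 1 with (indic true). rewrite <- (E_refl t).
  apply (lsum_ge_term (fun r => indic (E t r) * mu r)); auto.
  intros; apply Rmult_le_pos; auto using indic_nonneg.
Qed.

End ConditionOnClasses.

Lemma forallb_ext_in {A} (f g : A -> bool) l :
  (forall x, In x l -> f x = g x) -> forallb f l = forallb g l.
Proof. induction l as [|a l IH]; simpl; auto; intros H. rewrite H, IH; auto. Qed.

Lemma nabla_refl n G x l s : nabla n G x l s s = true.
Proof. apply forallb_forall; intros y _. rewrite Nat.eqb_refl, orb_true_r; auto. Qed.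

Lemma nabla_sym n G x l s t : nabla n G x l s t = nabla n G x l t s.
Proof. apply forallb_ext_in; intros y _. rewrite Nat.eqb_sym; auto. Qed.

Lemma nabla_trans n G x l s t r :
  nabla n G x l s t = true -> nabla n G x l s r = nabla n G x l t r.
Proof.
  unfold nabla; intros H. rewrite forallb_forall in H. apply forallb_ext_in; intros y Hy.
  specialize (H y Hy). destruct (dist_le G x y l); simpl in *; auto.
  apply Nat.eqb_eq in H. rewrite H; auto.
Qed.

Lemma nabla_far n G x l s t j : (j < n)%nat -> dist_le G x j l = false ->
  nabla n G x l s t = true -> nth j t 0%nat = nth j s 0%nat.
Proof.
  unfold nabla; intros Hj Hd H. apply Nat.eqb_eq.
  rewrite forallb_forall in H. specialize (H j (proj2 (in_seq _ _ _) (conj (Nat.le_0_l _) Hj))).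
  rewrite Hd in H; exact H.
Qed.

Definition close_pairs (n : nat) (G : fgraph) (l : nat) : R :=
  lsum (fun i => lsum (fun j => indic (dist_le G i j l)) (seq 0 n)) (seq 0 n).

Definition pair_tv (q n i j : nat) (G : fgraph) : R :=
  tv2 q (marg2 q n G i j) (fun a b => marg1 q n G i a * marg1 q n G j b).

Definition overlap_integrand (q n l i : nat) (s : list nat) (G : fgraph) : R :=
  gibbs q n G s * tv1 q (marg1 q n G i) (condmarg q n G i (nabla n G i l s)).

Definition overlap_at (q n : nat) (G : fgraph) (l i : nat) : R :=
  lsum (fun s => overlap_integrand q n l i s G) (tuples q n).

Section GibbsMeasure.

Variables (q n : nat) (G : fgraph).
Hypothesis weight_nonneg : forall s, In s (tuples q n) -> 0 <= weight G s.

Lemma Zpart_nonneg : 0 <= Zpart q n G.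
Proof. apply lsum_nonneg; auto. Qed.

Lemma gibbs_nonneg s : In s (tuples q n) -> 0 <= gibbs q n G s.
Proof. intros Hs. apply Rdiv_nonneg; auto using Zpart_nonneg. Qed.

Lemma lsum_gibbs_le1 : lsum (gibbs q n G) (tuples q n) <= 1.
Proof.
  unfold gibbs, Rdiv. rewrite lsum_mulr. apply Rdiv_le_1.
  pose proof Zpart_nonneg; unfold Zpart in *; lra.
Qed.

Lemma gibbs_le1 s : In s (tuples q n) -> gibbs q n G s <= 1.
Proof.
  intros Hs. eapply Rle_trans; [|apply lsum_gibbs_le1].
  apply lsum_ge_term; auto using gibbs_nonneg.
Qed.

Lemma lsum_gibbs_indic_le1 (c : list nat -> R) :
  (forall s, 0 <= c s <= 1) -> lsum (fun s => c s * gibbs q n G s) (tuples q n) <= 1.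
Proof.
  intros Hc. eapply Rle_trans; [|apply lsum_gibbs_le1].
  apply lsum_weighted_le; [apply gibbs_nonneg|intros; apply Hc].
Qed.

Lemma marg1E x a :
  marg1 q n G x a = lsum (fun s => indic (Nat.eqb (nth x s 0%nat) a) * gibbs q n G s) (tuples q n).
Proof. apply lsum_ext; intros; apply if_indic. Qed.

Lemma marg2E x y a b :
  marg2 q n G x y a b =
  lsum (fun s => indic (Nat.eqb (nth x s 0%nat) a) * indic (Nat.eqb (nth y s 0%nat) b) * gibbs q n G s)
       (tuples q n).
Proof. apply lsum_ext; intros; rewrite if_indic, indic_andb; reflexivity. Qed.

Lemma marg1_nonneg x a : 0 <= marg1 q n G x a.
Proof.
  rewrite marg1E. apply lsum_nonneg; intros.
  apply Rmult_le_pos; [apply indic_nonneg|apply gibbs_nonneg; auto].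
Qed.

Lemma marg2_nonneg x y a b : 0 <= marg2 q n G x y a b.
Proof.
  rewrite marg2E. apply lsum_nonneg; intros.
  apply Rmult_le_pos; [apply Rmult_le_pos; apply indic_nonneg|apply gibbs_nonneg; auto].
Qed.

Lemma lsum_indic_nth_bounds x s : 0 <= lsum (fun a => indic (Nat.eqb (nth x s 0%nat) a)) (seq 0 q) <= 1.
Proof. split; [apply lsum_nonneg; intros; apply indic_nonneg|apply lsum_indic_eqb_le1]. Qed.

Lemma lsum_marg1_le1 x : lsum (marg1 q n G x) (seq 0 q) <= 1.
Proof.
  rewrite (lsum_ext _ _ _ (fun a _ => marg1E x a)), lsum_comm.
  rewrite (lsum_ext _ (fun s => lsum (fun a => indic (Nat.eqb (nth x s 0%nat) a)) (seq 0 q) *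
                                gibbs q n G s))
    by (intros; apply lsum_mulr).
  apply lsum_gibbs_indic_le1. intros; apply lsum_indic_nth_bounds.
Qed.

Lemma lsum_marg2_le1 x y : lsum (fun a => lsum (marg2 q n G x y a) (seq 0 q)) (seq 0 q) <= 1.
Proof.
  set (ix s := lsum (fun a => indic (Nat.eqb (nth x s 0%nat) a)) (seq 0 q)).
  set (iy s := lsum (fun b => indic (Nat.eqb (nth y s 0%nat) b)) (seq 0 q)).
  rewrite (lsum_ext _ (fun a => lsum (fun s => indic (Nat.eqb (nth x s 0%nat) a) *
                                               (iy s * gibbs q n G s))
                                     (tuples q n))).
  2:{ intros a _. rewrite (lsum_ext _ _ _ (fun b _ => marg2E x y a b)), lsum_comm.
      apply lsum_ext; intros s _. unfold iy. rewrite <- lsum_mulr, <- lsum_mull.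
      apply lsum_ext; intros; ring. }
  rewrite lsum_comm.
  rewrite (lsum_ext _ (fun s => (ix s * iy s) * gibbs q n G s))
    by (intros; rewrite lsum_mulr; unfold ix; ring).
  apply lsum_gibbs_indic_le1. intros s.
  pose proof (lsum_indic_nth_bounds x s); pose proof (lsum_indic_nth_bounds y s).
  unfold ix, iy. nra.
Qed.

Lemma condmarg_nonneg x E a : 0 <= condmarg q n G x E a.
Proof.
  apply Rdiv_nonneg; apply lsum_nonneg; intros s Hs;
    [destruct (E s && _)|destruct (E s)]; auto using gibbs_nonneg; lra.
Qed.

Lemma lsum_condmarg_le1 x E : lsum (condmarg q n G x E) (seq 0 q) <= 1.
Proof.
  unfold condmarg, Rdiv. rewrite lsum_mulr. apply Rdiv_le_1. split.
  - apply lsum_nonneg; intros a _. apply lsum_nonneg; intros s Hs.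
    destruct (E s && _); auto using gibbs_nonneg; lra.
  - rewrite lsum_comm. apply lsum_le; intros s Hs.
    rewrite (lsum_ext _ (fun a => indic (Nat.eqb (nth x s 0%nat) a) * (indic (E s) * gibbs q n G s)))
      by (intros; rewrite if_indic, indic_andb; ring).
    rewrite if_indic, lsum_mulr.
    assert (0 <= indic (E s) * gibbs q n G s)
      by (apply Rmult_le_pos; auto using indic_nonneg, gibbs_nonneg).
    pose proof (lsum_indic_eqb_le1 (nth x s 0%nat) 0 q). nra.
Qed.

Lemma tv1_condmarg_le1 x E : tv1 q (marg1 q n G x) (condmarg q n G x E) <= 1.
Proof.
  apply tv1_le1; auto using marg1_nonneg, condmarg_nonneg, lsum_marg1_le1, lsum_condmarg_le1.
Qed.

Lemma pair_tv_le1 x y : pair_tv q n x y G <= 1.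
Proof.
  apply tv2_le1; auto using marg2_nonneg, lsum_marg2_le1.
  - intros; apply Rmult_le_pos; apply marg1_nonneg.
  - rewrite (lsum_ext _ (fun a => marg1 q n G x a * lsum (marg1 q n G y) (seq 0 q)))
      by (intros; apply lsum_mull).
    rewrite lsum_mulr. pose proof (lsum_marg1_le1 x); pose proof (lsum_marg1_le1 y).
    assert (0 <= lsum (marg1 q n G x) (seq 0 q)) by (apply lsum_nonneg; intros; apply marg1_nonneg).
    assert (0 <= lsum (marg1 q n G y) (seq 0 q)) by (apply lsum_nonneg; intros; apply marg1_nonneg).
    rewrite <- (Rmult_1_l 1). apply Rmult_le_compat; lra.
Qed.

(* Conditioning on [nabla_l(G, x_i, s)] freezes the spin of a far variable [x_j]. *)
Lemma marg2_sub_mul_far i j l a b : (j < n)%nat -> dist_le G i j l = false ->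
  marg2 q n G i j a b - marg1 q n G i a * marg1 q n G j b =
  lsum (fun s => gibbs q n G s * indic (Nat.eqb (nth j s 0%nat) b) *
                 (condmarg q n G i (nabla n G i l s) a - marg1 q n G i a)) (tuples q n).
Proof.
  intros Hj Hd.
  assert (Hcond : lsum (fun s => gibbs q n G s * indic (Nat.eqb (nth j s 0%nat) b) *
                    condmarg q n G i (nabla n G i l s) a) (tuples q n) = marg2 q n G i j a b).
  { rewrite marg2E. unfold condmarg.
    rewrite (lsum_ext _ (fun s => gibbs q n G s * indic (Nat.eqb (nth j s 0%nat) b) *
        (lsum (fun t => indic (nabla n G i l s t) * indic (Nat.eqb (nth i t 0%nat) a) * gibbs q n G t)
              (tuples q n) /
         lsum (fun t => indic (nabla n G i l s t) * gibbs q n G t) (tuples q n)))).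
    2:{ intros s _. do 2 f_equal; apply lsum_ext; intros;
        rewrite if_indic; [rewrite indic_andb|]; reflexivity. }
    rewrite lsum_cond_class; auto using gibbs_nonneg, nabla_refl, nabla_sym, nabla_trans.
    intros s t H. rewrite (nabla_far n G i l s t j); auto. }
  rewrite <- Hcond, (marg1E j b), <- lsum_mull, <- lsum_sub.
  apply lsum_ext; intros; ring.
Qed.

Lemma pair_tv_far_le i j l : (j < n)%nat -> dist_le G i j l = false ->
  pair_tv q n i j G <= overlap_at q n G l i.
Proof.
  intros Hj Hd. set (c s a := condmarg q n G i (nabla n G i l s) a).
  set (mi := marg1 q n G i).
  set (err s a := gibbs q n G s * Rabs (c s a - mi a)).
  assert (Herr : forall s a, In s (tuples q n) -> 0 <= err s a)
    by (intros; apply Rmult_le_pos; auto using gibbs_nonneg, Rabs_pos).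
  unfold pair_tv, overlap_at, overlap_integrand, tv1, tv2. fold mi.
  rewrite (lsum_ext _ (fun s => / 2 * lsum (fun a => err s a) (seq 0 q))).
  2:{ intros s _. unfold err. rewrite lsum_mull.
      rewrite (lsum_ext (fun x => Rabs (c s x - mi x)) (fun a => Rabs (mi a - c s a)))
        by (intros; apply Rabs_minus_sym).
      unfold c. ring. }
  rewrite (lsum_mull (/ 2) (fun s => lsum (fun a => err s a) (seq 0 q))), (lsum_comm err).
  apply Rmult_le_compat_l; [lra|].
  apply lsum_le; intros a _.
  apply Rle_trans with (lsum (fun b => lsum (fun s => indic (Nat.eqb (nth j s 0%nat) b) * err s a)
                                             (tuples q n)) (seq 0 q)).
  - apply lsum_le; intros b _. rewrite (marg2_sub_mul_far i j l) by auto.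
    eapply Rle_trans; [apply Rabs_lsum_le|]. apply lsum_le; intros s Hs.
    unfold err. rewrite !Rabs_mult, (Rabs_pos_eq (indic _)), (Rabs_pos_eq (gibbs q n G s));
      auto using indic_nonneg, gibbs_nonneg. apply Req_le; unfold c, mi; ring.
  - rewrite lsum_comm. apply lsum_le; intros s Hs. rewrite lsum_mulr.
    pose proof (Herr s a Hs). pose proof (lsum_indic_eqb_le1 (nth j s 0%nat) 0 q). nra.
Qed.

Lemma lsum_pair_tv_le l :
  lsum (fun i => lsum (fun j => pair_tv q n i j G) (seq 0 n)) (seq 0 n)
  <= close_pairs n G l + INR n * lsum (overlap_at q n G l) (seq 0 n).
Proof.
  unfold close_pairs. rewrite <- lsum_mull, <- lsum_add.
  apply lsum_le; intros i _.
  replace (INR n * overlap_at q n G l i) with (lsum (fun _ => overlap_at q n G l i) (seq 0 n))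
    by (rewrite lsum_const, length_seq; ring).
  rewrite <- lsum_add.
  apply lsum_le; intros j Hj. apply in_seq in Hj.
  assert (0 <= overlap_at q n G l i)
    by (apply lsum_nonneg; intros; apply Rmult_le_pos; auto using gibbs_nonneg, tv1_nonneg).
  destruct (dist_le G i j l) eqn:D; simpl indic.
  - pose proof (pair_tv_le1 i j). lra.
  - pose proof (pair_tv_far_le i j l ltac:(lia) D). lra.
Qed.

End GibbsMeasure.

(** * Growth of neighbourhoods *)

Definition wf_constraint (q n k : nat) (a : constraint) : Prop :=
  (length (snd a) <= k)%nat /\ Forall (fun v => (v < n)%nat) (snd a) /\
  forall s, length s = length (snd a) -> Forall (fun v => (v < q)%nat) s -> 0 <= fst a s.

Lemma nth_Forall (P : nat -> Prop) s v d : Forall P s -> P d -> P (nth v s d).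
Proof. revert v; induction s; intros v H Hd; destruct v; simpl; auto; inversion H; auto. Qed.

Lemma weight_nonneg_wf q n k G : (1 <= q)%nat -> Forall (wf_constraint q n k) G ->
  forall s, In s (tuples q n) -> 0 <= weight G s.
Proof.
  intros Hq HG s Hs. apply in_tuples in Hs as [_ Hs].
  induction HG as [|a G [_ [_ Ha]] _ IH]; simpl; [lra|].
  apply Rmult_le_pos; auto. apply Ha; [rewrite length_map; auto|].
  apply Forall_map, Forall_forall; intros v _. apply (nth_Forall (fun v => (v < q)%nat)); auto; lia.
Qed.

Definition degree (G : fgraph) (z : nat) : nat :=
  fold_right (fun a acc => (count_occ Nat.eq_dec (snd a) z + acc)%nat) 0%nat G.

Lemma degree_lsum G z : INR (degree G z) = lsum (fun a => occ (snd a) z) G.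
Proof. induction G as [|a G IH]; [reflexivity|]. simpl degree. rewrite plus_INR, IH. reflexivity. Qed.

Section BallGrowth.

Variables (q n k : nat) (G : fgraph) (D : R).
Hypothesis G_wf : Forall (wf_constraint q n k) G.
Hypothesis D_nonneg : 0 <= D.
Hypothesis degree_le : forall z, (z < n)%nat -> INR (degree G z) <= D.

Definition ball (h x : nat) : R := lsum (fun y => indic (near G h x y)) (seq 0 n).

Definition touches (h x : nat) (a : constraint) : bool := existsb (near G h x) (snd a).

Lemma ball_succ_le h x :
  ball (S h) x <= ball h x + INR k * lsum (fun a => indic (touches h x a)) G.
Proof.
  unfold ball. rewrite <- lsum_mull.
  apply Rle_trans with (ball h x + lsum (fun a => indic (touches h x a) *
                          lsum (fun y => indic (existsb (Nat.eqb y) (snd a))) (seq 0 n)) G).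
  - unfold ball. rewrite (lsum_ext (fun a => _ * _)
      (fun a => lsum (fun y => indic (touches h x a) * indic (existsb (Nat.eqb y) (snd a))) (seq 0 n)))
      by (intros; symmetry; apply lsum_mull).
    rewrite lsum_comm, <- lsum_add. apply lsum_le; intros y _. simpl near.
    eapply Rle_trans; [apply indic_orb_le|]. apply Rplus_le_compat_l.
    eapply Rle_trans; [apply indic_existsb_le|]. apply lsum_le; intros a _.
    rewrite indic_andb. apply Rle_refl.
  - apply Rplus_le_compat_l, lsum_le; intros a Ha. rewrite Rmult_comm.
    apply Rmult_le_compat_r; [apply indic_nonneg|].
    eapply Rle_trans; [apply lsum_le; intros y _; apply indic_mem_le_occ|].
    eapply Rle_trans; [apply lsum_occ_le|]. apply le_INR.
    rewrite Forall_forall in G_wf. apply (G_wf a Ha).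
Qed.

Lemma touching_le h x : lsum (fun a => indic (touches h x a)) G <= D * ball h x.
Proof.
  apply Rle_trans with
    (lsum (fun a => lsum (fun z => indic (near G h x z) * occ (snd a) z) (seq 0 n)) G).
  - apply lsum_le; intros a Ha.
    assert (0 <= lsum (fun z => indic (near G h x z) * occ (snd a) z) (seq 0 n))
      by (apply lsum_nonneg; intros; apply Rmult_le_pos; auto using indic_nonneg, occ_nonneg).
    unfold touches. destruct (existsb _ _) eqn:Ex; simpl indic; [|lra].
    apply existsb_exists in Ex as [z [Hz Hnear]].
    rewrite Forall_forall in G_wf. destruct (G_wf a Ha) as [_ [Hlt _]].
    rewrite Forall_forall in Hlt.
    eapply Rle_trans; [|apply (lsum_ge_term _ _ z)].
    + cbv beta. rewrite Hnear; simpl indic. apply (count_occ_In Nat.eq_dec) in Hz.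
      apply le_INR in Hz. unfold occ. simpl in Hz. lra.
    + intros; apply Rmult_le_pos; auto using indic_nonneg, occ_nonneg.
    + apply in_seq. specialize (Hlt z Hz). lia.
  - rewrite lsum_comm. unfold ball. rewrite <- lsum_mull. apply lsum_le; intros z Hz.
    apply in_seq in Hz. rewrite lsum_mull, <- degree_lsum.
    pose proof (degree_le z ltac:(lia)). pose proof (indic_nonneg (near G h x z)). nra.
Qed.

Lemma ball_le h x : ball h x <= (1 + INR k * D) ^ h.
Proof.
  revert x; induction h as [|h IH]; intros x; [apply lsum_indic_eqb_le1|].
  pose proof (ball_succ_le h x).
  assert (INR k * lsum (fun a => indic (touches h x a)) G <= INR k * (D * ball h x))
    by (apply Rmult_le_compat_l; auto using pos_INR, touching_le).
  assert ((1 + INR k * D) * ball h x <= (1 + INR k * D) * (1 + INR k * D) ^ h).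
  { apply Rmult_le_compat_l; auto. pose proof (pos_INR k). nra. }
  simpl pow. nra.
Qed.

Lemma close_pairs_le l : close_pairs n G l <= INR n * (1 + INR k * D) ^ (Nat.div2 l).
Proof.
  unfold close_pairs.
  replace (INR n * _) with (lsum (fun _ => (1 + INR k * D) ^ Nat.div2 l) (seq 0 n))
    by (rewrite lsum_const, length_seq; ring).
  apply lsum_le; intros i _. apply ball_le.
Qed.

End BallGrowth.

Lemma close_pairs_le_sq n G l : close_pairs n G l <= INR n * INR n.
Proof.
  unfold close_pairs.
  replace (INR n * INR n) with (lsum (fun _ => lsum (fun _ => 1) (seq 0 n)) (seq 0 n))
    by (rewrite !lsum_const, !length_seq; ring).
  apply lsum_le; intros i _. apply lsum_le; intros; apply indic_le1.
Qed.

(** * Poisson mixtures *)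

(* [T m F] is the unnormalised expectation of [F] over the graphs with [m] constraints;
   both models are normalised Poisson mixtures [m ~ Po(lam)] of such families. *)
Record pos_family (good : fgraph -> Prop) (T : nat -> (fgraph -> R) -> R) (S : R) : Prop := {
  pos_family_add : forall m F1 F2, T m (fun G => F1 G + F2 G) = T m F1 + T m F2;
  pos_family_scal : forall m a F, T m (fun G => a * F G) = a * T m F;
  pos_family_mono : forall m F1 F2, (forall G, good G -> F1 G <= F2 G) -> T m F1 <= T m F2;
  pos_family_one : forall m, T m (fun _ => 1) <= S ^ m }.

Definition mixture (lam : R) (T : nat -> (fgraph -> R) -> R) (F : fgraph -> R) : R :=
  series (fun m => po lam m * T m F).

Lemma pair_tv_bounds q n i j G : (forall s, In s (tuples q n) -> 0 <= weight G s) ->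
  0 <= pair_tv q n i j G <= 1.
Proof. intros Hw. split; [apply tv2_nonneg|apply pair_tv_le1; auto]. Qed.

Lemma overlap_integrand_bounds q n l i s G : (forall s, In s (tuples q n) -> 0 <= weight G s) ->
  In s (tuples q n) -> 0 <= overlap_integrand q n l i s G <= 1.
Proof.
  intros Hw Hs. unfold overlap_integrand.
  pose proof (gibbs_nonneg q n G Hw s Hs); pose proof (gibbs_le1 q n G Hw s Hs).
  pose proof (tv1_nonneg q (marg1 q n G i) (condmarg q n G i (nabla n G i l s))).
  pose proof (tv1_condmarg_le1 q n G Hw i (nabla n G i l s)). nra.
Qed.

Section PoissonMixture.

Variables (good : fgraph -> Prop) (T : nat -> (fgraph -> R) -> R) (S lam : R).
Hypothesis T_pos : pos_family good T S.
Hypothesis lam_nonneg : 0 <= lam.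

Lemma pos_family_zero m : T m (fun _ => 0) = 0.
Proof.
  transitivity (T m (fun _ => 0 * 1)).
  - f_equal; apply functional_extensionality; intros; ring.
  - rewrite (pos_family_scal _ _ _ T_pos m 0 (fun _ => 1)); ring.
Qed.

Lemma pos_family_lsum {A} m (f : A -> fgraph -> R) l :
  T m (fun G => lsum (fun i => f i G) l) = lsum (fun i => T m (f i)) l.
Proof.
  induction l as [|a l IH]; [apply pos_family_zero|].
  rewrite lsum_cons, <- IH. apply (pos_family_add _ _ _ T_pos m (f a)).
Qed.

Lemma pos_family_nonneg m F : (forall G, good G -> 0 <= F G) -> 0 <= T m F.
Proof. intros HF. rewrite <- (pos_family_zero m). apply (pos_family_mono _ _ _ T_pos); auto. Qed.

Lemma pos_family_le_const m F B : 0 <= B -> (forall G, good G -> F G <= B) -> T m F <= B * S ^ m.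
Proof.
  intros HB HF. apply Rle_trans with (T m (fun _ => B * 1)).
  - apply (pos_family_mono _ _ _ T_pos); intros; rewrite Rmult_1_r; auto.
  - rewrite (pos_family_scal _ _ _ T_pos m B (fun _ => 1)).
    apply Rmult_le_compat_l; auto. apply (pos_family_one _ _ _ T_pos).
Qed.

Lemma mixture_summable F B : 0 <= B -> (forall G, good G -> 0 <= F G <= B) ->
  infinite_sum (fun m => po lam m * T m F) (mixture lam T F).
Proof.
  intros HB HF. apply (infinite_sum_dominated _ (fun m => B * (po lam m * S ^ m))
                        (B * (exp (- lam) * exp (lam * S)))).
  - intros m. split.
    + apply Rmult_le_pos; [apply po_nonneg; auto|]. apply pos_family_nonneg; apply HF.
    + rewrite <- Rmult_assoc, (Rmult_comm B), Rmult_assoc.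
      apply Rmult_le_compat_l; [apply po_nonneg; auto|].
      apply pos_family_le_const; auto. apply HF.
  - apply infinite_sum_scal, infinite_sum_po_pow.
Qed.

Lemma mixture_nonneg F B : 0 <= B -> (forall G, good G -> 0 <= F G <= B) -> 0 <= mixture lam T F.
Proof.
  intros HB HF. eapply infinite_sum_nonneg; [|exact (mixture_summable F B HB HF)].
  intros m. apply Rmult_le_pos; [apply po_nonneg; auto|]. apply pos_family_nonneg; apply HF.
Qed.

Variables (q n : nat).
Hypothesis good_weight_nonneg : forall G, good G -> forall s, In s (tuples q n) -> 0 <= weight G s.

Variables (E : nat -> (fgraph -> R) -> R) (Z : R).
Hypothesis Z_pos : 0 < Z.
Hypothesis E_mixture : forall F, E n F = mixture lam T F / Z.

Lemma pair_corr_nonneg : 0 <= pair_corr q E n.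
Proof.
  apply Rmult_le_pos; [apply Rinv_nonneg, pow_le, pos_INR|].
  apply lsum_nonneg; intros i _; apply lsum_nonneg; intros j _.
  rewrite E_mixture. apply Rdiv_nonneg; [|lra].
  apply (mixture_nonneg _ 1); [lra|]. intros G HG. apply pair_tv_bounds, good_weight_nonneg, HG.
Qed.

Variables (l : nat) (A B : R) (H : fgraph -> R).
Hypothesis close_pairs_bound : forall G, good G -> close_pairs n G l <= A + B * H G.

Lemma pos_family_pair_le m :
  lsum (fun i => lsum (fun j => T m (pair_tv q n i j)) (seq 0 n)) (seq 0 n)
  <= A * T m (fun _ => 1) + B * T m H +
     INR n * lsum (fun i => lsum (fun s => T m (overlap_integrand q n l i s)) (tuples q n)) (seq 0 n).
Proof.
  rewrite (lsum_ext _ (fun i => T m (fun G => lsum (fun j => pair_tv q n i j G) (seq 0 n))))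
    by (intros; symmetry; apply pos_family_lsum).
  rewrite (lsum_ext (fun i => lsum _ (tuples q n))
             (fun i => T m (fun G => lsum (fun s => overlap_integrand q n l i s G) (tuples q n))))
    by (intros; symmetry; apply pos_family_lsum).
  rewrite <- (pos_family_lsum m (fun i G => lsum (fun j => pair_tv q n i j G) (seq 0 n))).
  rewrite <- (pos_family_lsum m (fun i G => lsum (fun s => overlap_integrand q n l i s G) (tuples q n))).
  rewrite <- !(pos_family_scal _ _ _ T_pos), <- !(pos_family_add _ _ _ T_pos).
  apply (pos_family_mono _ _ _ T_pos). intros G HG.
  pose proof (close_pairs_bound G HG) as Hclose.
  pose proof (lsum_pair_tv_le q n G (good_weight_nonneg G HG) l) as Htv.
  unfold overlap_at in Htv. lra.
Qed.

Lemma mixture_pair_le V : 0 <= A -> 0 <= B -> infinite_sum (fun m => po lam m * T m H) V ->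
  lsum (fun i => lsum (fun j => mixture lam T (pair_tv q n i j)) (seq 0 n)) (seq 0 n)
  <= A * mixture lam T (fun _ => 1) + B * V +
     INR n * lsum (fun i => lsum (fun s => mixture lam T (overlap_integrand q n l i s)) (tuples q n))
                  (seq 0 n).
Proof.
  intros HA HB HV. eapply infinite_sum_le; cycle 1.
  - apply infinite_sum_lsum; intros i _; apply infinite_sum_lsum; intros j _.
    apply (mixture_summable _ 1); [lra|]. intros G HG; apply pair_tv_bounds, good_weight_nonneg, HG.
  - apply infinite_sum_add; [apply infinite_sum_add; apply infinite_sum_scal|].
    + apply (mixture_summable _ 1); intros; lra.
    + exact HV.
    + apply infinite_sum_scal, infinite_sum_lsum; intros i _; apply infinite_sum_lsum; intros s Hs.
      apply (mixture_summable _ 1); [lra|]. intros G HG; apply overlap_integrand_bounds; auto.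
  - intros m. cbv beta.
    rewrite !(lsum_ext (fun i => lsum (fun _ => po lam m * _) _)
                       (fun i => po lam m * lsum (fun x => T m (_ x)) _))
      by (intros; apply lsum_mull).
    rewrite !lsum_mull.
    pose proof (pos_family_pair_le m). pose proof (po_nonneg lam m lam_nonneg). nra.
Qed.

Hypothesis mixture_one_le : mixture lam T (fun _ => 1) <= Z.

Lemma pair_corr_le V : (1 <= n)%nat -> 0 <= A -> 0 <= B ->
  infinite_sum (fun m => po lam m * T m H) V ->
  pair_corr q E n <= overlap_quantity q E l n + (A + B * V / Z) / INR n ^ 2.
Proof.
  intros Hn HA HB HV. pose proof (mixture_pair_le V HA HB HV) as Hpair.
  assert (Hn0 : 0 < INR n) by (apply lt_0_INR; lia).
  assert (Hone : A * mixture lam T (fun _ => 1) <= A * Z) by (apply Rmult_le_compat_l; auto).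
  unfold pair_corr, overlap_quantity.
  rewrite (lsum_ext _ (fun i => lsum (fun j => mixture lam T (pair_tv q n i j)) (seq 0 n) / Z))
    by (intros; unfold Rdiv; rewrite <- lsum_mulr; apply lsum_ext; intros; apply E_mixture).
  rewrite (lsum_ext (fun i => lsum (fun s => E n _) _)
             (fun i => lsum (fun s => mixture lam T (overlap_integrand q n l i s)) (tuples q n) / Z))
    by (intros; unfold Rdiv; rewrite <- lsum_mulr; apply lsum_ext; intros; apply E_mixture).
  unfold Rdiv. rewrite !lsum_mulr.
  set (P := lsum (fun i => lsum (fun j => mixture lam T (pair_tv q n i j)) (seq 0 n)) (seq 0 n)) in *.
  set (O := lsum (fun i => lsum (fun s => mixture lam T (overlap_integrand q n l i s)) (tuples q n))
                 (seq 0 n)) in *.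
  apply (Rmult_le_reg_l (INR n ^ 2 * Z)); [apply Rmult_lt_0_compat; auto; apply pow_lt; auto|].
  replace (INR n ^ 2 * Z * (/ INR n ^ 2 * (P * / Z))) with P by (field; lra).
  replace (INR n ^ 2 * Z * (/ INR n * (O * / Z) + (A + B * V * / Z) * / INR n ^ 2))
    with (INR n * O + A * Z + B * V) by (field; lra).
  lra.
Qed.

End PoissonMixture.

Lemma Un_cv_of_lim_limsup_zero (a : nat -> R) (ov err : nat -> nat -> R) :
  lim_limsup_zero ov ->
  (forall l n, (1 <= n)%nat -> 0 <= a n <= ov l n + err l n) ->
  (forall l e, e > 0 -> exists N, forall n, (n >= N)%nat -> err l n < e) ->
  Un_cv a 0.
Proof.
  intros Hov Hb Herr e He.
  destruct (Hov (e / 2) ltac:(lra)) as [L HL]. destruct (HL L (le_n L)) as [N1 HN1].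
  destruct (Herr L (e / 2) ltac:(lra)) as [N2 HN2].
  exists (Nat.max 1 (Nat.max N1 N2)). intros n Hn.
  destruct (Hb L n ltac:(lia)). specialize (HN1 n ltac:(lia)). specialize (HN2 n ltac:(lia)).
  unfold R_dist. rewrite Rminus_0_r, Rabs_right by lra. lra.
Qed.

(** * The Poisson model *)

Lemma exp_INR_mul m t : exp (INR m * t) = exp t ^ m.
Proof.
  induction m as [|m IH]; [simpl; rewrite Rmult_0_l, exp_0; auto|].
  rewrite S_INR, Rmult_plus_distr_r, Rmult_1_l, exp_plus, IH. simpl. ring.
Qed.

Lemma pow_div_le_exp y m : 0 <= y -> (y / INR (S m)) ^ (S m) <= exp y.
Proof.
  intros Hy. assert (0 < INR (S m)) by (apply lt_0_INR; lia).
  replace y with (INR (S m) * (y / INR (S m))) at 2 by (field; lra).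
  rewrite exp_INR_mul. apply pow_incr. split; [apply Rdiv_nonneg; lra|].
  pose proof (exp_ineq1_le (y / INR (S m))). lra.
Qed.

Lemma ln2_pos : 0 < ln 2.
Proof. rewrite <- ln_1. apply ln_increasing; lra. Qed.

Lemma poly_div_pow2_small c h : 0 <= c -> forall e, e > 0 ->
  exists M, forall L, (L >= M)%nat -> (c * INR L) ^ h / 2 ^ L < e.
Proof.
  intros Hc e He.
  (* [exp y >= (y / (h+1))^(h+1)] at [y = L ln 2] gives [2^L >= c0 L^(h+1)]. *)
  set (c0 := (ln 2 / INR (S h)) ^ (S h)).
  assert (Hc0 : 0 < c0) by (apply pow_lt, Rdiv_lt_0_compat; [apply ln2_pos|apply lt_0_INR; lia]).
  destruct (INR_unbounded (c ^ h / (c0 * e))) as [M HM].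
  exists (S M). intros L HL.
  assert (HLM : INR M < INR L) by (apply lt_INR; lia).
  assert (HL0 : 0 < INR L) by (pose proof (pos_INR M); lra).
  assert (Hexp : c0 * INR L ^ (S h) <= 2 ^ L).
  { replace (2 ^ L) with (exp (INR L * ln 2)) by (rewrite exp_INR_mul, exp_ln; lra).
    eapply Rle_trans; [|apply pow_div_le_exp; pose proof ln2_pos; nra].
    unfold c0. rewrite <- Rpow_mult_distr. apply Req_le. f_equal. field. apply not_0_INR; lia. }
  apply Rle_lt_trans with ((c ^ h * INR L ^ h) / (c0 * INR L ^ (S h))).
  { rewrite Rpow_mult_distr. unfold Rdiv. apply Rmult_le_compat_l.
    - apply Rmult_le_pos; apply pow_le; lra.
    - apply Rinv_le_contravar; auto. apply Rmult_lt_0_compat; auto. apply pow_lt; lra. }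
  assert (0 < INR L ^ h) by (apply pow_lt; lra).
  replace (c ^ h * INR L ^ h / (c0 * INR L ^ S h)) with (c ^ h / (c0 * e) / INR L * e)
    by (simpl; field; repeat split; lra).
  apply (Rmult_lt_reg_r (/ e)); [apply Rinv_0_lt_compat; lra|].
  replace (c ^ h / (c0 * e) / INR L * e * / e) with (c ^ h / (c0 * e) / INR L) by (field; split; lra).
  rewrite Rinv_r by lra. apply (Rmult_lt_reg_r (INR L)); auto.
  unfold Rdiv at 1. rewrite Rmult_assoc, Rinv_l, Rmult_1_r, Rmult_1_l by lra. lra.
Qed.

Definition deg_cutoff (n : nat) : nat := (2 * Nat.log2 n + 2)%nat.

Lemma ball_term_small k h : forall e, e > 0 -> exists N, forall n, (n >= N)%nat ->
  (1 + INR k * INR (deg_cutoff n)) ^ h / INR n < e.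
Proof.
  intros e He. assert (Hk : 0 <= INR k) by apply pos_INR.
  destruct (poly_div_pow2_small (1 + 4 * INR k) h ltac:(lra) e He) as [M HM].
  exists (Nat.max 2 (2 ^ M)). intros n Hn. set (L := Nat.log2 n).
  destruct (Nat.log2_spec n ltac:(lia)) as [HL1 _]. fold L in HL1.
  assert (HL : (1 <= L)%nat) by (change 1%nat with (Nat.log2 2); apply Nat.log2_le_mono; lia).
  assert (HLM : (L >= M)%nat) by (rewrite <- (Nat.log2_pow2 M) by lia; apply Nat.log2_le_mono; lia).
  assert (HLr : 1 <= INR L) by (apply (le_INR 1); auto).
  assert (Hn2 : 2 ^ L <= INR n) by (rewrite <- (pow_INR 2); apply le_INR; auto).
  eapply Rle_lt_trans; [|apply (HM L HLM)]. unfold Rdiv. apply Rmult_le_compat.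
  - apply pow_le. pose proof (pos_INR (deg_cutoff n)). nra.
  - apply Rinv_nonneg, pos_INR.
  - apply pow_incr. split; [pose proof (pos_INR (deg_cutoff n)); nra|].
    unfold deg_cutoff. rewrite plus_INR, mult_INR. fold L. simpl INR. nra.
  - apply Rinv_le_contravar; [apply pow_lt|]; lra.
Qed.

Lemma tail_term_le K n : 0 <= K -> (1 <= n)%nat -> INR n * K / 2 ^ deg_cutoff n <= K / INR n.
Proof.
  intros HK Hn. set (P := 2 ^ S (Nat.log2 n)).
  assert (HnP : INR n <= P).
  { unfold P. rewrite <- (pow_INR 2). apply le_INR. apply Nat.lt_le_incl, Nat.log2_spec. lia. }
  assert (Hn0 : 0 < INR n) by (apply lt_0_INR; lia).
  replace (2 ^ deg_cutoff n) with (P * P)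
    by (unfold P, deg_cutoff; rewrite <- pow_add; f_equal; lia).
  assert (HP : 0 < P) by lra.
  apply (Rmult_le_reg_r (INR n * (P * P))); [apply Rmult_lt_0_compat; [|apply Rmult_lt_0_compat]; lra|].
  replace (INR n * K / (P * P) * (INR n * (P * P))) with (INR n * INR n * K) by (field; lra).
  replace (K / INR n * (INR n * (P * P))) with (P * P * K) by (field; lra).
  apply Rmult_le_compat_r; auto. apply Rmult_le_compat; lra.
Qed.

Lemma const_div_INR_small C : forall e, e > 0 -> exists N, forall n, (n >= N)%nat -> C / INR n < e.
Proof.
  intros e He. destruct (INR_unbounded (Rabs C / e)) as [N HN]. exists (S N). intros n Hn.
  assert (HnN : INR N < INR n) by (apply lt_INR; lia).
  assert (Hn0 : 0 < INR n) by (pose proof (pos_INR N); lra).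
  apply (Rmult_lt_reg_r (INR n)); auto. unfold Rdiv. rewrite Rmult_assoc, Rinv_l, Rmult_1_r by lra.
  assert (Rabs C < INR n * e).
  { apply (Rmult_lt_reg_r (/ e)); [apply Rinv_0_lt_compat; lra|].
    replace (INR n * e * / e) with (INR n) by (field; lra). unfold Rdiv in HN. lra. }
  pose proof (Rle_abs C). lra.
Qed.

Lemma poisson_error_small k K h : 0 <= K -> forall e, e > 0 -> exists N, forall n, (n >= N)%nat ->
  (1 + INR k * INR (deg_cutoff n)) ^ h / INR n + INR n * K / 2 ^ deg_cutoff n < e.
Proof.
  intros HK e He.
  destruct (ball_term_small k h (e / 2) ltac:(lra)) as [N1 HN1].
  destruct (const_div_INR_small K (e / 2) ltac:(lra)) as [N2 HN2].
  exists (Nat.max 1 (Nat.max N1 N2)). intros n Hn.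
  specialize (HN1 n ltac:(lia)). specialize (HN2 n ltac:(lia)).
  pose proof (tail_term_le K n HK ltac:(lia)). lra.
Qed.

Lemma in_draw_list {A} (D : list (R * A)) (P : A -> Prop) m :
  (forall c, In c D -> 0 <= fst c /\ P (snd c)) ->
  forall pc, In pc (draw_list D m) -> 0 <= fst pc /\ Forall P (snd pc).
Proof.
  intros HD. induction m as [|m IH]; intros pc Hpc; simpl in Hpc.
  - destruct Hpc as [<-|[]]. simpl. split; [lra|constructor].
  - apply in_flat_map in Hpc as [c [Hc Hpc]]. apply in_map_iff in Hpc as [cs [<- Hcs]].
    destruct (HD c Hc), (IH cs Hcs). simpl. split; [apply Rmult_le_pos; auto|constructor; auto].
Qed.

Lemma draw_list_prod {A} (D : list (R * A)) (g : A -> R) m :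
  lsum (fun pc => fst pc * fold_right (fun a acc => g a * acc) 1 (snd pc)) (draw_list D m)
  = (lsum (fun c => fst c * g (snd c)) D) ^ m.
Proof.
  induction m as [|m IH]; simpl; [simpl; ring|].
  rewrite lsum_flat_map, <- IH, <- lsum_mulr. apply lsum_ext; intros c _.
  rewrite lsum_map, <- lsum_mull. apply lsum_ext; intros; simpl; ring.
Qed.

Lemma lsum_fst_draw_list {A} (D : list (R * A)) m : lsum fst (draw_list D m) = (lsum fst D) ^ m.
Proof.
  transitivity ((lsum (fun c => fst c * 1) D) ^ m); [|f_equal; apply lsum_ext; intros; ring].
  rewrite <- (draw_list_prod D (fun _ => 1)). apply lsum_ext; intros pc _.
  replace (fold_right _ 1 (snd pc)) with 1; [ring|].
  induction (snd pc) as [|a t IH]; simpl; [reflexivity|]. rewrite <- IH. ring.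
Qed.

Definition pois_family (n k : nat) (rho : list (R * (list nat -> R))) (m : nat)
  (F : fgraph -> R) : R :=
  lsum (fun pc => fst pc * F (snd pc)) (draw_list (pois_draws n k rho) m).

Lemma in_pois_draws q n k rho : spec q k rho ->
  forall c, In c (pois_draws n k rho) -> 0 <= fst c /\ wf_constraint q n k (snd c).
Proof.
  intros (_ & Hnn & _ & Hpos) c Hc. apply in_flat_map in Hc as [pw [Hpw Hc]].
  apply in_map_iff in Hc as [t [<- Ht]]. apply in_tuples in Ht as [Lt Ft].
  rewrite Forall_forall in Hnn, Hpos. simpl. split.
  - apply Rdiv_nonneg; [apply Hnn; auto|apply pow_le, pos_INR].
  - split; [simpl; lia|split; [exact Ft|]].
    intros s Ls Fs. left. apply (Hpos pw Hpw); auto. simpl in Ls. lia.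
Qed.

Lemma lsum_fst_pois_draws q n k rho : (1 <= n)%nat -> spec q k rho ->
  lsum fst (pois_draws n k rho) = 1.
Proof.
  intros Hn (_ & _ & Hsum & _). unfold pois_draws. rewrite lsum_flat_map, <- Hsum.
  apply lsum_ext; intros pw _. rewrite lsum_map. cbn [fst].
  unfold Rdiv. rewrite lsum_const, length_tuples, pow_INR. field. apply pow_nonzero, not_0_INR; lia.
Qed.

Lemma pois_family_one q n k rho m : (1 <= n)%nat -> spec q k rho ->
  pois_family n k rho m (fun _ => 1) = 1.
Proof.
  intros Hn Hs. unfold pois_family. rewrite (lsum_ext _ fst) by (intros; ring).
  rewrite (lsum_fst_draw_list (pois_draws n k rho)), (lsum_fst_pois_draws q); auto. apply pow1.
Qed.

Lemma pois_family_pos q n k rho : (1 <= n)%nat -> spec q k rho ->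
  pos_family (Forall (wf_constraint q n k)) (pois_family n k rho) 1.
Proof.
  intros Hn Hs. split.
  - intros. unfold pois_family. rewrite <- lsum_add. apply lsum_ext; intros; ring.
  - intros. unfold pois_family. rewrite <- lsum_mull. apply lsum_ext; intros; ring.
  - intros m F1 F2 H. apply lsum_le; intros pc Hpc.
    destruct (in_draw_list _ _ m (in_pois_draws q n k rho Hs) pc Hpc).
    apply Rmult_le_compat_l; auto.
  - intros m. rewrite (pois_family_one q), pow1; auto. lra.
Qed.

Definition deg_moment (n : nat) (G : fgraph) : R := lsum (fun z => 2 ^ degree G z) (seq 0 n).

Definition occ_moment (n k : nat) (rho : list (R * (list nat -> R))) (z : nat) : R :=
  lsum (fun c => fst c * 2 ^ count_occ Nat.eq_dec (snd (snd c)) z) (pois_draws n k rho).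

Lemma pow2_degree G z :
  2 ^ degree G z = fold_right (fun a acc => 2 ^ count_occ Nat.eq_dec (snd a) z * acc) 1 G.
Proof. induction G as [|a G IH]; [reflexivity|]. simpl. rewrite pow_add, IH. reflexivity. Qed.

Lemma pois_family_deg_moment n k rho m :
  pois_family n k rho m (deg_moment n) = lsum (fun z => occ_moment n k rho z ^ m) (seq 0 n).
Proof.
  unfold pois_family, deg_moment.
  rewrite (lsum_ext _ (fun pc => lsum (fun z => fst pc * 2 ^ degree (snd pc) z) (seq 0 n)))
    by (intros; symmetry; apply lsum_mull).
  rewrite lsum_comm. apply lsum_ext; intros z _. unfold occ_moment.
  rewrite <- (draw_list_prod _ (fun a : constraint => 2 ^ count_occ Nat.eq_dec (snd a) z)).
  apply lsum_ext; intros pc _. rewrite pow2_degree. reflexivity.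
Qed.

Lemma lsum_tuples_pow2_occ n k z :
  lsum (fun t => 2 ^ count_occ Nat.eq_dec t z) (tuples n k) <= (INR n + 1) ^ k.
Proof.
  induction k as [|k IH]; [simpl; lra|]. simpl tuples. rewrite lsum_flat_map.
  set (M := lsum (fun t => 2 ^ count_occ Nat.eq_dec t z) (tuples n k)).
  assert (M0 : 0 <= M) by (apply lsum_nonneg; intros; apply pow_le; lra).
  rewrite (lsum_ext _ (fun x => (1 + indic (Nat.eqb z x)) * M)).
  2:{ intros x _. rewrite lsum_map. unfold M. rewrite <- lsum_mull.
      apply lsum_ext; intros t _. simpl count_occ.
      destruct (Nat.eq_dec x z), (Nat.eqb_spec z x); try lia; simpl; ring. }
  rewrite lsum_mulr, lsum_add, lsum_const, length_seq. simpl pow.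
  pose proof (lsum_indic_eqb_le1 z 0 n).
  assert (0 <= lsum (fun x => indic (Nat.eqb z x)) (seq 0 n))
    by (apply lsum_nonneg; intros; apply indic_nonneg).
  pose proof (pos_INR n). apply Rmult_le_compat; auto; lra.
Qed.

Lemma occ_moment_le q n k rho z : (1 <= n)%nat -> spec q k rho ->
  occ_moment n k rho z <= (1 + / INR n) ^ k.
Proof.
  intros Hn (_ & Hnn & Hsum & _). unfold occ_moment, pois_draws. rewrite lsum_flat_map.
  assert (Hn0 : 0 < INR n) by (apply lt_0_INR; lia).
  apply Rle_trans with (lsum (fun pw => fst pw * (1 + / INR n) ^ k) rho);
    [|rewrite lsum_mulr, Hsum; lra].
  apply lsum_le; intros pw Hpw. rewrite lsum_map. cbn [fst snd]. rewrite lsum_mull.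
  rewrite Forall_forall in Hnn. unfold Rdiv. rewrite Rmult_assoc.
  apply Rmult_le_compat_l; [apply Hnn; auto|].
  replace ((1 + / INR n) ^ k) with (/ INR n ^ k * (INR n + 1) ^ k)
    by (rewrite <- pow_inv, <- Rpow_mult_distr; f_equal; field; lra).
  apply Rmult_le_compat_l; [left; apply Rinv_0_lt_compat, pow_lt; auto|].
  apply lsum_tuples_pow2_occ.
Qed.

Lemma pow_sub1_le x k : 0 <= x -> (1 + x) ^ k - 1 <= INR k * x * (1 + x) ^ k.
Proof.
  intros Hx. induction k as [|k IH]; [simpl; lra|].
  rewrite S_INR. simpl. assert (1 <= (1 + x) ^ k) by (apply pow_R1_Rle; lra). nra.
Qed.

Lemma po_generating_le (d : R) n k b : (1 <= n)%nat -> (1 <= k)%nat -> 0 < d ->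
  b <= (1 + / INR n) ^ k ->
  exp (- (d * INR n / INR k)) * exp (d * INR n / INR k * b) <= exp (d * 2 ^ k).
Proof.
  intros Hn Hk Hd Hb. rewrite <- exp_plus.
  assert (Hn0 : 0 < INR n) by (apply lt_0_INR; lia).
  assert (Hk0 : 0 < INR k) by (apply lt_0_INR; lia).
  assert (Hinv : 0 <= / INR n <= 1).
  { split; [apply Rinv_nonneg; lra|].
    rewrite <- Rinv_1. apply Rinv_le_contravar; [lra|apply (le_INR 1); auto]. }
  assert (Hb1 : b - 1 <= INR k * / INR n * 2 ^ k).
  { pose proof (pow_sub1_le (/ INR n) k (proj1 Hinv)).
    assert ((1 + / INR n) ^ k <= 2 ^ k) by (apply pow_incr; lra).
    assert (0 <= INR k * / INR n) by (apply Rmult_le_pos; lra). nra. }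
  replace (- (d * INR n / INR k) + d * INR n / INR k * b) with (d * INR n / INR k * (b - 1)) by ring.
  destruct (Req_dec (d * INR n / INR k * (b - 1)) (d * 2 ^ k)) as [->|Hne]; [lra|].
  left; apply exp_increasing.
  assert (d * INR n / INR k * (b - 1) <= d * INR n / INR k * (INR k * / INR n * 2 ^ k))
    by (apply Rmult_le_compat_l; auto; apply Rdiv_nonneg; nra).
  replace (d * INR n / INR k * (INR k * / INR n * 2 ^ k)) with (d * 2 ^ k) in H by (field; lra).
  lra.
Qed.

Lemma pois_deg_moment_summable q n k rho (d : R) : (1 <= n)%nat -> (1 <= k)%nat -> 0 < d ->
  spec q k rho ->
  exists V, infinite_sum (fun m => po (d * INR n / INR k) m * pois_family n k rho m (deg_moment n)) V
            /\ V <= INR n * exp (d * 2 ^ k).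
Proof.
  intros Hn Hk Hd Hs. set (lam := d * INR n / INR k).
  exists (lsum (fun z => exp (- lam) * exp (lam * occ_moment n k rho z)) (seq 0 n)). split.
  - apply (infinite_sum_ext (fun m => lsum (fun z => po lam m * occ_moment n k rho z ^ m) (seq 0 n))).
    + intros m. rewrite pois_family_deg_moment, lsum_mull. reflexivity.
    + apply (infinite_sum_lsum (fun z m => po lam m * occ_moment n k rho z ^ m)).
      intros; apply infinite_sum_po_pow.
  - replace (INR n * _) with (lsum (fun _ => exp (d * 2 ^ k)) (seq 0 n))
      by (rewrite lsum_const, length_seq; ring).
    apply lsum_le; intros z _. apply po_generating_le; auto. apply (occ_moment_le q); auto.
Qed.

(* Either every degree is at most [D], or some [2 ^ degree] exceeds [2 ^ D] and the trivial
   bound [n^2] on the close pairs is paid for by [deg_moment]. *)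
Lemma close_pairs_le_moment q n k G l D : Forall (wf_constraint q n k) G ->
  close_pairs n G l <=
  INR n * (1 + INR k * INR D) ^ (Nat.div2 l) + INR n * INR n / 2 ^ D * deg_moment n G.
Proof.
  intros HG.
  assert (HM : 0 <= deg_moment n G) by (apply lsum_nonneg; intros; apply pow_le; lra).
  assert (P2 : 0 < 2 ^ D) by (apply pow_lt; lra).
  assert (Hball : 0 <= INR n * (1 + INR k * INR D) ^ Nat.div2 l).
  { apply Rmult_le_pos; [apply pos_INR|apply pow_le].
    pose proof (pos_INR k); pose proof (pos_INR D); nra. }
  destruct (classic (forall z, (z < n)%nat -> (degree G z <= D)%nat)) as [Hall|Hno].
  - pose proof (close_pairs_le q n k G (INR D) HG (pos_INR D) ltac:(intros; apply le_INR; auto) l).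
    assert (0 <= INR n * INR n / 2 ^ D * deg_moment n G)
      by (apply Rmult_le_pos; auto; apply Rdiv_nonneg; [apply Rmult_le_pos; apply pos_INR|lra]).
    lra.
  - apply not_all_ex_not in Hno as [z Hz]. apply imply_to_and in Hz as [Hz1 Hz2].
    assert (2 ^ D <= deg_moment n G).
    { eapply Rle_trans; [|apply (lsum_ge_term _ _ z)].
      - apply Rle_pow; [lra|lia].
      - intros; apply pow_le; lra.
      - apply in_seq; lia. }
    pose proof (close_pairs_le_sq n G l).
    replace (INR n * INR n / 2 ^ D * deg_moment n G) with (INR n * INR n * (deg_moment n G / 2 ^ D))
      by (field; lra).
    assert (1 <= deg_moment n G / 2 ^ D)
      by (apply (Rmult_le_reg_r (2 ^ D)); auto; unfold Rdiv; rewrite Rmult_assoc, Rinv_l; lra).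
    assert (0 <= INR n * INR n) by (apply Rmult_le_pos; apply pos_INR). nra.
Qed.

Lemma pois_mixture_one q n k rho lam : (1 <= n)%nat -> spec q k rho ->
  mixture lam (pois_family n k rho) (fun _ => 1) = 1.
Proof.
  intros Hn Hs. apply series_eq, (infinite_sum_ext (fun m => po lam m * 1 ^ m)).
  - intros m. rewrite (pois_family_one q), pow1; auto.
  - pose proof (infinite_sum_po_pow lam 1) as Hpo.
    rewrite Rmult_1_r, <- exp_plus, Rplus_opp_l, exp_0 in Hpo. exact Hpo.
Qed.

Lemma pois_pair_corr_le q k rho (d : R) l n : (1 <= q)%nat -> (1 <= k)%nat -> spec q k rho ->
  0 < d -> (1 <= n)%nat ->
  0 <= pair_corr q (EPois d k rho) n <=
  overlap_quantity q (EPois d k rho) l n +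
  ((1 + INR k * INR (deg_cutoff n)) ^ Nat.div2 l / INR n + INR n * exp (d * 2 ^ k) / 2 ^ deg_cutoff n).
Proof.
  intros Hq Hk Hs Hd Hn.
  assert (Hn0 : 0 < INR n) by (apply lt_0_INR; lia).
  set (lam := d * INR n / INR k). set (D := deg_cutoff n).
  assert (Hlam : 0 <= lam) by (apply Rdiv_nonneg; [apply Rmult_le_pos|apply pos_INR]; lra).
  assert (P2 : 0 < 2 ^ D) by (apply pow_lt; lra).
  set (A := INR n * (1 + INR k * INR D) ^ Nat.div2 l). set (B := INR n * INR n / 2 ^ D).
  assert (HA : 0 <= A).
  { apply Rmult_le_pos; [lra|apply pow_le]. pose proof (pos_INR k); pose proof (pos_INR D); nra. }
  assert (HB : 0 <= B) by (apply Rdiv_nonneg; nra).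
  pose proof (pois_family_pos q n k rho Hn Hs) as Hpos.
  assert (Hw : forall G, Forall (wf_constraint q n k) G ->
            forall s, In s (tuples q n) -> 0 <= weight G s)
    by (intros G HG; apply (weight_nonneg_wf q n k); auto).
  assert (Hclose : forall G, Forall (wf_constraint q n k) G ->
                             close_pairs n G l <= A + B * deg_moment n G)
    by (intros; apply (close_pairs_le_moment q); auto).
  assert (HE : forall F, EPois d k rho n F = mixture lam (pois_family n k rho) F / 1)
    by (intros; unfold Rdiv; rewrite Rinv_1, Rmult_1_r; reflexivity).
  assert (Hone : mixture lam (pois_family n k rho) (fun _ => 1) <= 1)
    by (rewrite (pois_mixture_one q); auto; lra).
  destruct (pois_deg_moment_summable q n k rho d Hn Hk Hd Hs) as [V [HV HVle]].
  split; [apply (pair_corr_nonneg _ _ _ lam Hpos Hlam q n Hw _ 1); auto; lra|].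
  eapply Rle_trans;
    [apply (pair_corr_le _ _ _ lam Hpos Hlam q n Hw _ 1 ltac:(lra) HE l A B _ Hclose Hone V); auto|].
  apply Rplus_le_compat_l. unfold A, B.
  replace ((INR n * (1 + INR k * INR D) ^ Nat.div2 l + INR n * INR n / 2 ^ D * V / 1) / INR n ^ 2)
    with ((1 + INR k * INR D) ^ Nat.div2 l / INR n + V / 2 ^ D) by (field; lra).
  apply Rplus_le_compat_l. unfold Rdiv. apply Rmult_le_compat_r; [apply Rinv_nonneg; lra|exact HVle].
Qed.

(** * The percolated regular model *)

Definition wf_arity (k : nat) (a : (list nat -> R) * nat) : Prop :=
  (snd a <= k)%nat /\ forall s, 0 <= fst a s.

Lemma in_reg_draws q k eps rho : spec q k rho -> 0 < eps <= 1 ->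
  forall c, In c (reg_draws q k eps rho) -> 0 <= fst c /\ wf_arity k (snd c).
Proof.
  intros (_ & Hnn & _ & Hpos) He c Hc. apply in_flat_map in Hc as [pw [Hpw Hc]].
  apply in_map_iff in Hc as [J [<- HJ]]. rewrite Forall_forall in Hnn, Hpos. cbn [fst snd]. split.
  - repeat apply Rmult_le_pos; [apply Hnn; auto|apply pow_le; lra|apply pow_le; lra].
  - split; cbn [fst snd].
    + apply in_map_iff in HJ as [b [<- _]].
      eapply Nat.le_trans; [apply filter_length_le|]. rewrite length_seq; auto.
    + intros s. apply Rdiv_nonneg; [|apply pow_le, pos_INR]. apply lsum_nonneg; intros t Ht.
      destruct (list_eq_dec _ _ _); [|lra]. apply in_tuples in Ht. left; apply (Hpos pw Hpw); tauto.
Qed.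

Lemma build_wf q n k ar t : Forall (wf_arity k) ar -> Forall (fun v => (v < n)%nat) t ->
  Forall (wf_constraint q n k) (build ar t) /\
  forall z, (degree (build ar t) z <= count_occ Nat.eq_dec t z)%nat.
Proof.
  revert t; induction ar as [|a ar IH]; intros t Har Ht; simpl; [split; [constructor|intros; lia]|].
  inversion Har as [|? ? [Hk Hw] Har']; subst.
  rewrite <- (firstn_skipn (snd a) t) in Ht. apply Forall_app in Ht as [Hfirst Hskip].
  destruct (IH _ Har' Hskip) as [Hwf Hdeg]. split.
  - constructor; auto. split; [cbn [snd]; rewrite length_firstn; lia|split; auto]. intros; apply Hw.
  - intros z. specialize (Hdeg z). rewrite <- (firstn_skipn (snd a) t) at 3.
    rewrite count_occ_app. cbn [snd]. lia.
Qed.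

Definition reg_good (q n k d : nat) (G : fgraph) : Prop :=
  Forall (wf_constraint q n k) G /\ forall z, (z < n)%nat -> (degree G z <= d)%nat.

Definition reg_family (q n d k : nat) (eps : R) (rho : list (R * (list nat -> R))) (m : nat)
  (F : fgraph -> R) : R :=
  lsum (reg_term n d F) (draw_list (reg_draws q k eps rho) m).

Definition reg_acceptance (q n d k : nat) (eps : R) (rho : list (R * (list nat -> R))) (m : nat) : R :=
  lsum (reg_acc n d) (draw_list (reg_draws q k eps rho) m).

Lemma reg_acc_bounds n d pc : 0 <= fst pc -> 0 <= reg_acc n d pc <= fst pc.
Proof. intros H. unfold reg_acc. destruct (Nat.leb _ _); lra. Qed.

Lemma reg_term_one_le n d pc : 0 <= fst pc -> reg_term n d (fun _ => 1) pc <= reg_acc n d pc.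
Proof.
  intros H. unfold reg_term, reg_acc. destruct (Nat.leb _ _); [|lra].
  rewrite <- (Rmult_1_r (fst pc)) at 2. apply Rmult_le_compat_l; auto.
  apply Rdiv_le_1. rewrite lsum_const, Rmult_1_r. split; [apply pos_INR|lra].
Qed.

Section RegularModel.

Variables (q n d k : nat) (eps : R) (rho : list (R * (list nat -> R))).
Hypothesis rho_spec : spec q k rho.
Hypothesis eps_range : 0 < eps <= 1.

Lemma in_reg_draw_list m pc : In pc (draw_list (reg_draws q k eps rho) m) ->
  0 <= fst pc /\ Forall (wf_arity k) (snd pc).
Proof. apply in_draw_list, in_reg_draws; auto. Qed.

Lemma reg_family_pos :
  pos_family (reg_good q n k d) (reg_family q n d k eps rho) (lsum fst (reg_draws q k eps rho)).
Proof.
  split; unfold reg_family.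
  - intros m F1 F2. rewrite <- lsum_add. apply lsum_ext; intros pc _.
    unfold reg_term. destruct (Nat.leb _ _); [|ring]. rewrite lsum_add. unfold Rdiv. ring.
  - intros m a F. rewrite <- lsum_mull. apply lsum_ext; intros pc _.
    unfold reg_term. destruct (Nat.leb _ _); [|ring]. rewrite lsum_mull. unfold Rdiv. ring.
  - intros m F1 F2 HF. apply lsum_le; intros pc Hpc.
    destruct (in_reg_draw_list m pc Hpc) as [H0 Har].
    unfold reg_term. destruct (Nat.leb _ _); [|lra]. apply Rmult_le_compat_l; auto.
    unfold Rdiv. apply Rmult_le_compat_r; [apply Rinv_nonneg, pos_INR|].
    apply lsum_le; intros t Ht. apply filter_In in Ht as [Ht Hdeg].
    apply in_tuples in Ht as [_ Ht]. destruct (build_wf q n k _ t Har Ht) as [Hwf Hocc].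
    apply HF. split; auto. intros z Hz. specialize (Hocc z).
    unfold deg_ok in Hdeg. rewrite forallb_forall in Hdeg.
    specialize (Hdeg z (proj2 (in_seq _ _ _) (conj (Nat.le_0_l _) Hz))).
    apply Nat.leb_le in Hdeg. lia.
  - intros m. rewrite <- lsum_fst_draw_list. apply lsum_le; intros pc Hpc.
    destruct (in_reg_draw_list m pc Hpc) as [H0 _].
    pose proof (reg_term_one_le n d pc H0). pose proof (reg_acc_bounds n d pc H0). lra.
Qed.

Lemma reg_acceptance_bounds m :
  0 <= reg_acceptance q n d k eps rho m <= (lsum fst (reg_draws q k eps rho)) ^ m.
Proof.
  unfold reg_acceptance. rewrite <- lsum_fst_draw_list.
  split; [apply lsum_nonneg|apply lsum_le]; intros pc Hpc;
    apply reg_acc_bounds, (in_reg_draw_list m pc Hpc).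
Qed.

Definition reg_normaliser (lam : R) : R := series (fun m => po lam m * reg_acceptance q n d k eps rho m).

Lemma reg_acceptance_summable lam : 0 <= lam ->
  infinite_sum (fun m => po lam m * reg_acceptance q n d k eps rho m) (reg_normaliser lam).
Proof.
  intros Hlam. set (S := lsum fst (reg_draws q k eps rho)).
  apply (infinite_sum_dominated _ (fun m => po lam m * S ^ m) (exp (- lam) * exp (lam * S)));
    [|apply infinite_sum_po_pow].
  intros m. pose proof (po_nonneg lam m Hlam). destruct (reg_acceptance_bounds m).
  split; [nra|]. apply Rmult_le_compat_l; auto.
Qed.

(* With no constraints the graph is always accepted, so the [m = 0] term is [exp (- lam)]. *)
Lemma reg_normaliser_pos lam : 0 <= lam -> 0 < reg_normaliser lam.
Proof.
  intros Hlam. eapply Rlt_le_trans; [|apply (sum_incr _ 0 _ (reg_acceptance_summable lam Hlam))].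
  - unfold reg_acceptance, reg_acc, po. simpl. unfold Rdiv. rewrite Rinv_1.
    pose proof (exp_pos (- lam)). lra.
  - intros m. pose proof (po_nonneg lam m Hlam). destruct (reg_acceptance_bounds m). nra.
Qed.

Lemma reg_mixture_one_le lam : 0 <= lam ->
  mixture lam (reg_family q n d k eps rho) (fun _ => 1) <= reg_normaliser lam.
Proof.
  intros Hlam. eapply infinite_sum_le; [|apply (mixture_summable _ _ _ _ reg_family_pos Hlam _ 1);
                                          intros; lra|apply reg_acceptance_summable; auto].
  intros m. apply Rmult_le_compat_l; [apply po_nonneg; auto|].
  apply lsum_le; intros pc Hpc. apply reg_term_one_le, (in_reg_draw_list m pc Hpc).
Qed.

Lemma reg_pair_corr_le l : (1 <= q)%nat -> (1 <= k)%nat -> (1 <= n)%nat ->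
  0 <= pair_corr q (EReg q d k eps rho) n <=
  overlap_quantity q (EReg q d k eps rho) l n + (1 + INR k * INR d) ^ Nat.div2 l / INR n.
Proof.
  intros Hq Hk Hn.
  assert (Hn0 : 0 < INR n) by (apply lt_0_INR; lia).
  set (lam := INR d * INR n / INR k).
  assert (Hlam : 0 <= lam) by (apply Rdiv_nonneg; [apply Rmult_le_pos|]; apply pos_INR).
  pose proof reg_family_pos as Hpos.
  assert (Hw : forall G, reg_good q n k d G -> forall s, In s (tuples q n) -> 0 <= weight G s)
    by (intros G [HG _]; apply (weight_nonneg_wf q n k); auto).
  set (A := INR n * (1 + INR k * INR d) ^ Nat.div2 l).
  assert (Hclose : forall G, reg_good q n k d G -> close_pairs n G l <= A + 0 * (fun _ => 0) G).
  { intros G [HG Hdeg]. rewrite Rmult_0_l, Rplus_0_r.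
    apply (close_pairs_le q n k G (INR d) HG (pos_INR d)). intros; apply le_INR; auto. }
  assert (HE : forall F, EReg q d k eps rho n F =
                         mixture lam (reg_family q n d k eps rho) F / reg_normaliser lam)
    by reflexivity.
  assert (HV : infinite_sum (fun m => po lam m * reg_family q n d k eps rho m (fun _ => 0)) 0).
  { apply (infinite_sum_ext (fun _ => 0)); [|apply infinite_sum_0].
    intros m. rewrite (pos_family_zero _ _ _ Hpos). ring. }
  pose proof (reg_normaliser_pos lam Hlam) as HZ.
  split; [apply (pair_corr_nonneg _ _ _ lam Hpos Hlam q n Hw _ _ HZ HE)|].
  eapply Rle_trans; [apply (pair_corr_le _ _ _ lam Hpos Hlam q n Hw _ _ HZ HE l A 0 _ Hclose
                              (reg_mixture_one_le lam Hlam) 0); auto; [|lra]|].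
  - apply Rmult_le_pos; [lra|]. apply pow_le. pose proof (pos_INR k); pose proof (pos_INR d). nra.
  - apply Req_le. unfold A. field. lra.
Qed.

End RegularModel.

Theorem lemma6 (q k : nat) (rho : list (R * (list nat -> R))) :
  (1 <= q)%nat -> (3 <= k)%nat -> spec q k rho ->
  (forall d : R, 0 < d ->
     lim_limsup_zero (overlap_quantity q (EPois d k rho)) ->
     Un_cv (pair_corr q (EPois d k rho)) 0)
  /\
  (forall (d : nat) (eps : R), (1 <= d)%nat -> 0 < eps <= 1 ->
     lim_limsup_zero (overlap_quantity q (EReg q d k eps rho)) ->
     Un_cv (pair_corr q (EReg q d k eps rho)) 0).
Proof.
  intros Hq Hk Hs. split.
  - intros d Hd Hov.
    apply (Un_cv_of_lim_limsup_zero _ _ (fun l n =>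
             (1 + INR k * INR (deg_cutoff n)) ^ Nat.div2 l / INR n +
             INR n * exp (d * 2 ^ k) / 2 ^ deg_cutoff n) Hov).
    + intros l n Hn. apply pois_pair_corr_le; auto. lia.
    + intros l. apply poisson_error_small. left; apply exp_pos.
  - intros d eps Hd He Hov.
    apply (Un_cv_of_lim_limsup_zero _ _ (fun l n => (1 + INR k * INR d) ^ Nat.div2 l / INR n) Hov).
    + intros l n Hn. apply reg_pair_corr_le; auto. lia.
    + intros l. apply const_div_INR_small.
Qed.
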